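(* For every integer $k\ge 0$, $$\int_0^{\pi/2} x^2\csc(x)\sin(2kx)\,dx = 3\zeta(2)\sum_{n=1}^k\frac{(-1)^{n+1}}{2n-1}-4\sum_{n=1}^k\frac{(-1)^{n+1}}{(2n-1)^3}.$$
   Context: $\zeta$ denotes the Riemann zeta function (so $\zeta(2)=\pi^2/6$). Empty sums (for $k=0$) equal $0$. *)

From Stdlib Require Import Reals.
From Coquelicot Require Import Coquelicot.
Open Scope R_scope.

Definition zeta (s : nat) : R := Series (fun n : nat => / (INR (n + 1)) ^ s).

Definition csc (x : R) : R := / sin x.

From Stdlib Require Import Reals Lra Lia.
From Coquelicot Require Import Coquelicot.
Open Scope R_scope.

(* Since sin (2kx) = 2 sin x * sum_{n=1}^k cos ((2n-1)x), the integrand is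
   2 sum_{n=1}^k x^2 cos ((2n-1)x), and each term integrates in closed form, the
   endpoint pi/2 being an odd multiple of pi/2 for every frequency 2n-1.  The
   constant pi^2/2 that appears is 3 zeta(2), by Matsuoka's proof of the Basel
   identity: for I_m = int_0^{pi/2} cos^m and J_m = int_0^{pi/2} x^2 cos^m,
   integration by parts gives Wallis' recurrence and
   1/(n+1)^2 = 2 (J_{2n}/I_{2n} - J_{2n+2}/I_{2n+2}), so the series telescopes
   to 2 J_0/I_0 = pi^2/6; the remainder J_{2n}/I_{2n} is at most 9/(2n+2)
   because x <= 3 sin x on [0, pi/2]. *)

Ltac change_eq_R := lazymatch goal with |- ?a = ?b => change (@eq R a b) end.

Ltac continuity_by_derive :=
  apply (ex_derive_continuous (K := R_AbsRing) (V := R_NormedModule)); auto_derive; auto.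

Lemma is_RInt_zero {V : NormedModule R_AbsRing} (a b : R) :
  is_RInt (fun _ => @zero V) a b zero.
Proof.
  assert (E : scal (b - a) (@zero V) = zero) by exact (scal_zero_r (b - a)).
  exact (eq_rect _ (is_RInt (fun _ => zero) a b) (is_RInt_const a b zero) _ E).
Qed.

Lemma is_RInt_sum_n_m {V : NormedModule R_AbsRing} (f : nat -> R -> V) (I : nat -> V) a b m k :
  (forall n, (m <= n <= k)%nat -> is_RInt (f n) a b (I n)) ->
  is_RInt (fun x => sum_n_m (fun n => f n x) m k) a b (sum_n_m I m k).
Proof.
  assert (Hzero : forall k, (k < m)%nat ->
    is_RInt (fun x => sum_n_m (fun n => f n x) m k) a b (sum_n_m I m k)).
  { intros j Hj. rewrite sum_n_m_zero by exact Hj.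
    apply is_RInt_ext with (fun _ => zero); [|apply is_RInt_zero].
    intros x _. now rewrite sum_n_m_zero. }
  induction k as [|k IH]; intros Hf.
  - destruct m as [|m]; [|apply Hzero; lia].
    rewrite sum_n_n. apply is_RInt_ext with (f 0%nat).
    + intros x _. now rewrite sum_n_n.
    + apply Hf; lia.
  - destruct (Compare_dec.le_lt_dec m (S k)) as [Hm|Hm]; [|now apply Hzero].
    rewrite sum_n_Sm by exact Hm.
    apply is_RInt_ext with (fun x => plus (sum_n_m (fun n => f n x) m k) (f (S k) x)).
    + intros x _. now rewrite sum_n_Sm.
    + apply is_RInt_plus; [apply IH; intros; apply Hf; lia | apply Hf; lia].
Qed.

Lemma is_series_telescoping (u : nat -> R) (l : R) :
  is_lim_seq u l -> is_series (fun n => u n - u (S n)) (u O - l).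
Proof.
  intros Hu.
  assert (Hsum : forall N, sum_n (fun n => u n - u (S n)) N = u O - u (S N)).
  { induction N as [|N IH].
    - now rewrite sum_O.
    - rewrite sum_Sn, IH. change plus with Rplus. change_eq_R. ring. }
  apply is_lim_seq_incr_1 in Hu.
  assert (Hlim : is_lim_seq (sum_n (fun n => u n - u (S n))) (u O - l)).
  { apply (is_lim_seq_ext (fun N => u O - u (S N))); [intros; now rewrite Hsum|].
    exact (is_lim_seq_minus' _ _ _ _ (is_lim_seq_const _) Hu). }
  exact Hlim.
Qed.

Lemma sum_n_m_Rmult_l (c : R) (u : nat -> R) m k :
  sum_n_m (fun n => c * u n) m k = c * sum_n_m u m k.
Proof. exact (sum_n_m_mult_l (K := R_Ring) c u m k). Qed.

Lemma sum_n_m_Rlincomb (u v : nat -> R) c d m k :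
  sum_n_m (fun n => c * u n - d * v n) m k = c * sum_n_m u m k - d * sum_n_m v m k.
Proof.
  rewrite (sum_n_m_ext _ (fun n => c * u n + - d * v n)) by (intros; change_eq_R; ring).
  rewrite (sum_n_m_plus (G := R_AbelianMonoid) (fun n => c * u n) (fun n => - d * v n)).
  rewrite (sum_n_m_Rmult_l c u), (sum_n_m_Rmult_l (- d) v).
  change plus with Rplus. unfold Rminus. now rewrite Ropp_mult_distr_l.
Qed.

Lemma is_RInt_eq_value (f : R -> R) a b l1 l2 :
  is_RInt f a b l1 -> is_RInt f a b l2 -> l1 = l2.
Proof. intros H1 H2. now rewrite <- (is_RInt_unique _ _ _ _ H1), (is_RInt_unique _ _ _ _ H2). Qed.

Definition int_cos_pow (m : nat) : R := RInt (fun x => cos x ^ m) 0 (PI / 2).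
Definition int_sqr_cos_pow (m : nat) : R := RInt (fun x => x ^ 2 * cos x ^ m) 0 (PI / 2).

Lemma is_RInt_cos_pow m : is_RInt (fun x => cos x ^ m) 0 (PI / 2) (int_cos_pow m).
Proof.
  apply (RInt_correct (V := R_CompleteNormedModule)).
  apply (ex_RInt_continuous (V := R_CompleteNormedModule)).
  intros; continuity_by_derive.
Qed.

Lemma is_RInt_sqr_cos_pow m : is_RInt (fun x => x ^ 2 * cos x ^ m) 0 (PI / 2) (int_sqr_cos_pow m).
Proof.
  apply (RInt_correct (V := R_CompleteNormedModule)).
  apply (ex_RInt_continuous (V := R_CompleteNormedModule)).
  intros; continuity_by_derive.
Qed.

(* The unfolded form of [INR (S m)] that [auto_derive] leaves behind. *)
Lemma S_INR_unfolded m : (match m with O => 1 | S _ => INR m + 1 end) = INR m + 1.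
Proof. exact (S_INR m). Qed.

Lemma is_derive_cos_pow_sin m x :
  is_derive (fun x => cos x ^ S m * sin x) x
    ((INR m + 2) * cos x ^ S (S m) - (INR m + 1) * cos x ^ m).
Proof.
  auto_derive; auto. rewrite S_INR_unfolded. change_eq_R.
  apply Rminus_diag_uniq.
  transitivity ((INR m + 1) * cos x ^ m * (1 - ((sin x)² + (cos x)²))); [unfold Rsqr; simpl; ring|].
  rewrite sin2_cos2. ring.
Qed.

Lemma is_derive_sqr_cos_pow m x :
  is_derive (fun x => 2 * x * cos x ^ S (S m) + (INR m + 2) * x ^ 2 * sin x * cos x ^ S m) x
    (2 * cos x ^ S (S m) + (INR m + 2) ^ 2 * (x ^ 2 * cos x ^ S (S m))
       - (INR m + 2) * (INR m + 1) * (x ^ 2 * cos x ^ m)).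
Proof.
  auto_derive; auto. rewrite !S_INR_unfolded. change_eq_R.
  apply Rminus_diag_uniq.
  transitivity ((INR m + 2) * (INR m + 1) * x ^ 2 * cos x ^ m * (1 - ((sin x)² + (cos x)²)));
    [unfold Rsqr; simpl; ring|].
  rewrite sin2_cos2. ring.
Qed.

Lemma is_RInt_derive_zero (F f : R -> R) a b :
  (forall x, is_derive F x (f x)) -> (forall x, continuous f x) -> F a = F b ->
  is_RInt f a b 0.
Proof.
  intros HF Hf Hab.
  replace 0 with (minus (F b) (F a)) by (rewrite Hab; change_eq_R; unfold minus, plus, opp; simpl; ring).
  apply (is_RInt_derive (V := R_CompleteNormedModule)); auto.
Qed.

Lemma int_cos_pow_rec m :
  (INR m + 2) * int_cos_pow (S (S m)) = (INR m + 1) * int_cos_pow m.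
Proof.
  apply Rminus_diag_uniq.
  apply (is_RInt_eq_value (fun x => (INR m + 2) * cos x ^ S (S m) - (INR m + 1) * cos x ^ m) 0 (PI / 2)).
  - exact (is_RInt_minus _ _ _ _ _ _
      (is_RInt_scal _ _ _ _ _ (is_RInt_cos_pow _)) (is_RInt_scal _ _ _ _ _ (is_RInt_cos_pow _))).
  - apply (is_RInt_derive_zero (fun x => cos x ^ S m * sin x)).
    + apply is_derive_cos_pow_sin.
    + intros x; continuity_by_derive.
    + rewrite cos_PI2, sin_0. simpl. ring.
Qed.

Lemma int_sqr_cos_pow_rec m :
  2 * int_cos_pow (S (S m)) + (INR m + 2) ^ 2 * int_sqr_cos_pow (S (S m))
  = (INR m + 2) * (INR m + 1) * int_sqr_cos_pow m.
Proof.
  apply Rminus_diag_uniq.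
  apply (is_RInt_eq_value (fun x => 2 * cos x ^ S (S m) + (INR m + 2) ^ 2 * (x ^ 2 * cos x ^ S (S m))
       - (INR m + 2) * (INR m + 1) * (x ^ 2 * cos x ^ m)) 0 (PI / 2)).
  - exact (is_RInt_minus _ _ _ _ _ _
      (is_RInt_plus _ _ _ _ _ _ (is_RInt_scal _ _ _ _ _ (is_RInt_cos_pow _))
         (is_RInt_scal _ _ _ _ _ (is_RInt_sqr_cos_pow _)))
      (is_RInt_scal _ _ _ _ _ (is_RInt_sqr_cos_pow _))).
  - apply (is_RInt_derive_zero
      (fun x => 2 * x * cos x ^ S (S m) + (INR m + 2) * x ^ 2 * sin x * cos x ^ S m)).
    + apply is_derive_sqr_cos_pow.
    + intros x; continuity_by_derive.
    + rewrite cos_PI2. simpl. ring.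
Qed.

Lemma int_cos_pow_0 : int_cos_pow 0 = PI / 2.
Proof.
  unfold int_cos_pow. simpl. rewrite RInt_const. change_eq_R.
  unfold scal; simpl. unfold mult; simpl. ring.
Qed.

Lemma int_sqr_cos_pow_0 : int_sqr_cos_pow 0 = (PI / 2) ^ 3 / 3.
Proof.
  apply is_RInt_unique.
  replace ((PI / 2) ^ 3 / 3) with (minus ((PI / 2) ^ 3 / 3) (0 ^ 3 / 3))
    by (change_eq_R; unfold minus, plus, opp; simpl; field).
  apply (is_RInt_derive (V := R_CompleteNormedModule) (fun x => x ^ 3 / 3)).
  - intros x _. auto_derive; auto. change_eq_R. simpl. field.
  - intros x _. continuity_by_derive.
Qed.

Lemma int_cos_pow_pos m : 0 < int_cos_pow m.
Proof.
  assert (HPI := PI_RGT_0).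
  apply RInt_gt_0; [lra| |intros; continuity_by_derive].
  intros x Hx. apply pow_lt, cos_gt_0; lra.
Qed.

Lemma int_sqr_cos_pow_nonneg m : 0 <= int_sqr_cos_pow m.
Proof.
  assert (HPI := PI_RGT_0).
  apply RInt_ge_0; [lra | eexists; apply is_RInt_sqr_cos_pow |].
  intros x Hx. apply Rmult_le_pos; [apply pow2_ge_0 | apply pow_le, cos_ge_0; lra].
Qed.

Lemma x_le_3_sin x : 0 <= x <= PI / 2 -> x <= 3 * sin x.
Proof.
  intros Hx. assert (H4 := PI_4).
  destruct (sin_bound x 0 ltac:(lra) ltac:(lra)) as [H _].
  unfold sin_approx, sin_term in H. simpl in H. nra.
Qed.

Lemma int_sqr_cos_pow_le m :
  int_sqr_cos_pow m <= 9 * (int_cos_pow m - int_cos_pow (S (S m))).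
Proof.
  assert (HPI := PI_RGT_0).
  apply (is_RInt_le (fun x => x ^ 2 * cos x ^ m) (fun x => 9 * (cos x ^ m - cos x ^ S (S m))) 0 (PI / 2));
    [lra | apply is_RInt_sqr_cos_pow | |].
  - exact (is_RInt_scal _ _ _ _ _
      (is_RInt_minus _ _ _ _ _ _ (is_RInt_cos_pow _) (is_RInt_cos_pow _))).
  - intros x Hx.
    assert (Hc : 0 <= cos x ^ m) by (apply pow_le, cos_ge_0; lra).
    assert (Hsin : x ^ 2 <= 9 * (sin x)²) by (assert (H := x_le_3_sin x ltac:(lra)); unfold Rsqr; nra).
    replace (cos x ^ m - cos x ^ S (S m)) with ((sin x)² * cos x ^ m)
      by (rewrite sin2; simpl; unfold Rsqr; ring).
    rewrite <- Rmult_assoc. now apply Rmult_le_compat_r.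
Qed.

Definition matsuoka_ratio (n : nat) : R := int_sqr_cos_pow (2 * n) / int_cos_pow (2 * n).

Lemma matsuoka_ratio_step n :
  / INR (S n) ^ 2 = 2 * (matsuoka_ratio n - matsuoka_ratio (S n)).
Proof.
  unfold matsuoka_ratio. replace (2 * S n)%nat with (S (S (2 * n))) by lia.
  assert (HW := int_cos_pow_rec (2 * n)). assert (HJ := int_sqr_cos_pow_rec (2 * n)).
  assert (HI := int_cos_pow_pos (S (S (2 * n)))).
  rewrite mult_INR in HW, HJ. change (INR 2) with 2 in HW, HJ. rewrite S_INR.
  assert (Hn := pos_INR n).
  set (I := int_cos_pow (2 * n)) in *. set (I' := int_cos_pow (S (S (2 * n)))) in *.
  set (J := int_sqr_cos_pow (2 * n)) in *. set (J' := int_sqr_cos_pow (S (S (2 * n)))) in *.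
  assert (EI : I = (2 * INR n + 2) / (2 * INR n + 1) * I').
  { apply (Rmult_eq_reg_l (2 * INR n + 1)); [|lra]. rewrite <- HW. field. lra. }
  assert (EJ' : J' = ((2 * INR n + 2) * (2 * INR n + 1) * J - 2 * I') / (2 * INR n + 2) ^ 2).
  { apply (Rmult_eq_reg_l ((2 * INR n + 2) ^ 2)); [|apply pow_nonzero; lra].
    field_simplify; [lra | lra]. }
  rewrite EI, EJ'.
  field. lra.
Qed.

Lemma matsuoka_ratio_bound n : 0 <= matsuoka_ratio n <= 9 / (2 * INR n + 2).
Proof.
  unfold matsuoka_ratio.
  assert (HI := int_cos_pow_pos (2 * n)). assert (HW := int_cos_pow_rec (2 * n)).
  assert (HJ := int_sqr_cos_pow_le (2 * n)). assert (HJ0 := int_sqr_cos_pow_nonneg (2 * n)).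
  rewrite mult_INR in HW. change (INR 2) with 2 in HW. assert (Hn := pos_INR n).
  set (I := int_cos_pow (2 * n)) in *. set (J := int_sqr_cos_pow (2 * n)) in *.
  assert (Hkey : J * (2 * INR n + 2) <= 9 * I) by nra.
  replace (9 / (2 * INR n + 2)) with (J / I + (9 * I - J * (2 * INR n + 2)) / (I * (2 * INR n + 2)))
    by (field; lra).
  assert (0 <= J / I) by (apply Rdiv_le_0_compat; lra).
  assert (0 <= (9 * I - J * (2 * INR n + 2)) / (I * (2 * INR n + 2)))
    by (apply Rdiv_le_0_compat; nra).
  lra.
Qed.

Lemma matsuoka_ratio_0 : matsuoka_ratio 0 = PI ^ 2 / 12.
Proof.
  unfold matsuoka_ratio. simpl (2 * 0)%nat.
  rewrite int_cos_pow_0, int_sqr_cos_pow_0. field. apply PI_neq0.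
Qed.

Lemma is_lim_seq_matsuoka_ratio : is_lim_seq matsuoka_ratio 0.
Proof.
  apply (is_lim_seq_le_le (fun _ => 0) _ (fun n => 9 / (2 * INR n + 2))).
  - apply matsuoka_ratio_bound.
  - apply is_lim_seq_const.
  - replace (Finite 0) with (Rbar_mult 9 (Rbar_inv p_infty)) by (simpl; f_equal; ring).
    apply (is_lim_seq_scal_l (fun n => / (2 * INR n + 2))), is_lim_seq_inv; [|discriminate].
    apply (is_lim_seq_le_p_loc INR); [|exact is_lim_seq_INR].
    exists O. intros n _. assert (Hn := pos_INR n). lra.
Qed.

Lemma basel : is_series (fun n => / INR (n + 1) ^ 2) (PI ^ 2 / 6).
Proof.
  apply (is_series_ext (fun n => 2 * matsuoka_ratio n - 2 * matsuoka_ratio (S n))).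
  - intros n. rewrite Nat.add_1_r, matsuoka_ratio_step. change_eq_R. ring.
  - replace (PI ^ 2 / 6) with (2 * matsuoka_ratio 0 - 2 * 0) by (rewrite matsuoka_ratio_0; field).
    apply (is_series_telescoping (fun n => 2 * matsuoka_ratio n)).
    replace (Finite (2 * 0)) with (Rbar_mult 2 0) by (simpl; f_equal; ring).
    apply is_lim_seq_scal_l, is_lim_seq_matsuoka_ratio.
Qed.

Lemma zeta_2 : zeta 2 = PI ^ 2 / 6.
Proof. apply is_series_unique, basel. Qed.

Lemma sin_even_mul_sum_cos k x :
  sin (2 * INR k * x) = 2 * sin x * sum_n_m (fun n => cos ((2 * INR n - 1) * x)) 1 k.
Proof.
  induction k as [|k IH].
  - rewrite sum_n_m_zero by lia. simpl. rewrite Rmult_0_r, Rmult_0_l, sin_0. symmetry. apply Rmult_0_r.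
  - rewrite (sum_n_Sm (G := R_AbelianMonoid)) by lia. change plus with Rplus.
    rewrite Rmult_plus_distr_l, <- IH, S_INR.
    replace (2 * (INR k + 1) * x) with ((2 * INR k + 1) * x + x) by ring.
    replace (2 * INR k * x) with ((2 * INR k + 1) * x - x) by ring.
    replace ((2 * (INR k + 1) - 1) * x) with ((2 * INR k + 1) * x) by ring.
    rewrite sin_plus, sin_minus. ring.
Qed.

Lemma sin_cos_odd_mul_PI2 n : (1 <= n)%nat ->
  sin ((2 * INR n - 1) * (PI / 2)) = (-1) ^ (n + 1) /\ cos ((2 * INR n - 1) * (PI / 2)) = 0.
Proof.
  intros Hn. induction n as [|n IH]; [lia|].
  destruct n as [|n].
  - simpl. replace ((2 * 1 - 1) * (PI / 2)) with (PI / 2) by ring.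
    rewrite sin_PI2, cos_PI2. split; ring.
  - destruct (IH ltac:(lia)) as [Hs Hc].
    replace ((2 * INR (S (S n)) - 1) * (PI / 2)) with ((2 * INR (S n) - 1) * (PI / 2) + PI)
      by (rewrite (S_INR (S n)); field).
    rewrite neg_sin, neg_cos, Hs, Hc. simpl. split; ring.
Qed.

Lemma is_RInt_sqr_cos_mul c a b : c <> 0 ->
  is_RInt (fun x => x ^ 2 * cos (c * x)) a b
    ((b ^ 2 * sin (c * b) / c + 2 * b * cos (c * b) / c ^ 2 - 2 * sin (c * b) / c ^ 3)
     - (a ^ 2 * sin (c * a) / c + 2 * a * cos (c * a) / c ^ 2 - 2 * sin (c * a) / c ^ 3)).
Proof.
  intros Hc.
  apply (is_RInt_derive (V := R_CompleteNormedModule)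
    (fun x => x ^ 2 * sin (c * x) / c + 2 * x * cos (c * x) / c ^ 2 - 2 * sin (c * x) / c ^ 3)).
  - intros x _. auto_derive; auto. change_eq_R. field. exact Hc.
  - intros x _. continuity_by_derive.
Qed.

Lemma is_RInt_sqr_cos_odd n : (1 <= n)%nat ->
  is_RInt (fun x => x ^ 2 * cos ((2 * INR n - 1) * x)) 0 (PI / 2)
    (PI ^ 2 / 4 * ((-1) ^ (n + 1) / (2 * INR n - 1)) - 2 * ((-1) ^ (n + 1) / (2 * INR n - 1) ^ 3)).
Proof.
  intros Hn.
  assert (Hc : 1 <= 2 * INR n - 1) by (apply le_INR in Hn; simpl in Hn; lra).
  destruct (sin_cos_odd_mul_PI2 n Hn) as [Hs Hcos].
  set (c := 2 * INR n - 1) in *.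
  replace (PI ^ 2 / 4 * _ - _) with
    (((PI / 2) ^ 2 * sin (c * (PI / 2)) / c + 2 * (PI / 2) * cos (c * (PI / 2)) / c ^ 2
        - 2 * sin (c * (PI / 2)) / c ^ 3)
     - (0 ^ 2 * sin (c * 0) / c + 2 * 0 * cos (c * 0) / c ^ 2 - 2 * sin (c * 0) / c ^ 3)).
  - apply is_RInt_sqr_cos_mul. lra.
  - rewrite Hs, Hcos, !Rmult_0_r, sin_0. field. lra.
Qed.

Theorem lemma2 (k : nat) :
  is_RInt (fun x : R => x ^ 2 * csc x * sin (2 * INR k * x)) 0 (PI / 2)
    (3 * zeta 2 * sum_n_m (fun n : nat => (-1) ^ (n + 1) / (2 * INR n - 1)) 1 k
     - 4 * sum_n_m (fun n : nat => (-1) ^ (n + 1) / (2 * INR n - 1) ^ 3) 1 k).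
Proof.
  assert (HPI := PI_RGT_0).
  apply (is_RInt_ext (fun x => 2 * sum_n_m (fun n => x ^ 2 * cos ((2 * INR n - 1) * x)) 1 k)).
  - intros x Hx. rewrite Rmin_left, Rmax_right in Hx by lra.
    assert (Hsin : 0 < sin x) by (apply sin_gt_0; lra).
    rewrite sin_even_mul_sum_cos, sum_n_m_Rmult_l. unfold csc. change_eq_R.
    (* [field] gets lost in [sum_n_m] atoms unless they are abstracted. *)
    set (C := sum_n_m _ 1 k). field. lra.
  - replace (3 * zeta 2 * _ - _) with
      (2 * sum_n_m (fun n => PI ^ 2 / 4 * ((-1) ^ (n + 1) / (2 * INR n - 1))
                             - 2 * ((-1) ^ (n + 1) / (2 * INR n - 1) ^ 3)) 1 k).
    + apply (is_RInt_scal (V := R_NormedModule)).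
      apply (is_RInt_sum_n_m (V := R_NormedModule) (fun n x => x ^ 2 * cos ((2 * INR n - 1) * x))).
      intros n Hn. apply is_RInt_sqr_cos_odd. lia.
    + rewrite sum_n_m_Rlincomb, zeta_2.
      set (S1 := sum_n_m _ 1 k). set (S3 := sum_n_m _ 1 k). field.
Qed.
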